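(* Fix $u$ and values $B_u>0$, $R_u^S>0$, $F_u>0$, and write $c_u=B_u r_u$. Define $\eta_u^{\mathrm{opt}}\in[0,1]$, $T_u^{\eta\text{-opt}}$ and $V_u^{\eta\text{-opt}}$ by the following six exhaustive cases: 1. If $c_u<R_u^S$: $\eta_u^{\mathrm{opt}}=0$, $T_u^{\eta\text{-opt}}=\frac{D_u}{c_u}$, $V_u^{\eta\text{-opt}}=0$. 2. If $R_u^S\le c_u<\frac{R_u^S}{\zeta_u}$ and $\frac{F_u}{\rho_u}<\frac{c_u-R_u^S}{1-\zeta_u}$: $\eta_u^{\mathrm{opt}}=\frac{F_u}{F_u(1-\zeta_u)+\rho_uR_u^S}$, $T_u^{\eta\text{-opt}}=\frac{D_u\rho_u}{F_u(1-\zeta_u)+\rho_uR_u^S}$, $V_u^{\eta\text{-opt}}=\frac{D_u}{c_u}\left[c_u-R_u^S-(1-\zeta_u)\frac{F_u}{\rho_u}\right]$. 3. If $R_u^S\le c_u<\frac{R_u^S}{\zeta_u}$ and $\frac{F_u}{\rho_u}\ge\frac{c_u-R_u^S}{1-\zeta_u}$: $\eta_u^{\mathrm{opt}}=\frac{c_u-R_u^S}{(1-\zeta_u)c_u}$, $T_u^{\eta\text{-opt}}=\frac{D_u}{c_u}$, $V_u^{\eta\text{-opt}}=0$. 4. If $c_u\ge\frac{R_u^S}{\zeta_u}$ and $\frac{F_u}{\rho_u}<\frac{R_u^S}{\zeta_u}$: $\eta_u^{\mathrm{opt}}=\frac{F_u}{F_u(1-\zeta_u)+\rho_uR_u^S}$,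 $T_u^{\eta\text{-opt}}=\frac{D_u\rho_u}{F_u(1-\zeta_u)+\rho_uR_u^S}$, $V_u^{\eta\text{-opt}}=\frac{D_u}{c_u}\left[c_u-R_u^S-(1-\zeta_u)\frac{F_u}{\rho_u}\right]$. 5. If $c_u\ge\frac{R_u^S}{\zeta_u}$ and $\frac{R_u^S}{\zeta_u}\le\frac{F_u}{\rho_u}<c_u$: $\eta_u^{\mathrm{opt}}=1$, $T_u^{\eta\text{-opt}}=\frac{\zeta_uD_u}{R_u^S}$, $V_u^{\eta\text{-opt}}=\frac{D_u}{c_u}\left[c_u-R_u^S-(1-\zeta_u)\frac{F_u}{\rho_u}\right]$. 6. If $c_u\ge\frac{R_u^S}{\zeta_u}$ and $\frac{F_u}{\rho_u}\ge c_u$: $\eta_u^{\mathrm{opt}}=1$, $T_u^{\eta\text{-opt}}=\frac{\zeta_uD_u}{R_u^S}$, $V_u^{\eta\text{-opt}}=\frac{D_u}{c_u}(\zeta_uc_u-R_u^S)$. Then $T_u(B_u,R_u^S,F_u,\eta_u^{\mathrm{opt}})=T_u^{\eta\text{-opt}}$, $V_u(B_u,R_u^S,F_u,\eta_u^{\mathrm{opt}})=V_u^{\eta\text{-opt}}$, and for every $\eta_u\in[0,1]$, $T_u(B_u,R_u^S,F_u,\eta_u^{\mathrm{opt}})\le T_u(B_u,R_u^S,F_u,\eta_u)$ and $V_u(B_u,R_u^S,F_u,\eta_u^{\mathrm{opt}})\le V_u(B_u,R_u^S,F_u,\eta_u)$.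
   Context: There are users $u=1,\dots,U$, each with constants $D_u>0$ (data size), $r_u>0$ (spectral efficiency), $\rho_u>0$ (computing intensity) and $\zeta_u\in(0,1)$ (computing output-to-input ratio). For $B_u>0$, $R_u^S>0$, $F_u>0$, $\eta_u\in[0,1]$, write $c_u=B_ur_u$ and define $T_u(B_u,R_u^S,F_u,\eta_u)$ and $V_u(B_u,R_u^S,F_u,\eta_u)$ piecewise: (a) if $\eta_uc_u\ge F_u/\rho_u$, $\zeta_uF_u/\rho_u+(1-\eta_u)c_u\ge R_u^S$, $F_u/\rho_u\ge\frac{\eta_uR_u^S}{\zeta_u\eta_u+1-\eta_u}$: $T_u=\frac{D_u}{R_u^S}(\zeta_u\eta_u+1-\eta_u)$, $V_u=\frac{D_u}{c_u}[c_u-R_u^S-(1-\zeta_u)\frac{F_u}{\rho_u}]$; (b) if $\eta_uc_u\ge F_u/\rho_u$, $\zeta_uF_u/\rho_u+(1-\eta_u)c_u\ge R_u^S$, $F_u/\rho_u<\frac{\eta_uR_u^S}{\zeta_u\eta_u+1-\eta_u}$: $T_u=\frac{\eta_uD_u\rho_u}{F_u}$, $V_u=\frac{D_u}{c_u}[c_u-R_u^S-(1-\zeta_u)\frac{F_u}{\rho_u}]$; (c) if $\eta_uc_u\ge F_u/\rho_u$, $\zeta_uF_u/\rho_u+(1-\eta_u)c_u< R_u^S$: $T_u=\frac{\eta_uD_u\rho_u}{F_u}$, $V_u=\frac{D_u}{c_u}(\eta_uc_u-\frac{F_u}{\rho_u})$; (d) if $\eta_uc_u< F_u/\rho_u$,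 $(\zeta_u\eta_u+1-\eta_u)c_u\ge R_u^S$: $T_u=\frac{D_u}{R_u^S}(\zeta_u\eta_u+1-\eta_u)$, $V_u=\frac{D_u}{c_u}[(\zeta_u\eta_u+1-\eta_u)c_u-R_u^S]$; (e) if $\eta_uc_u< F_u/\rho_u$, $(\zeta_u\eta_u+1-\eta_u)c_u< R_u^S$: $T_u=\frac{D_u}{c_u}$, $V_u=0$. *)

From mathcomp Require Import all_boot all_order all_algebra.
Set Implicit Arguments. Unset Strict Implicit. Unset Printing Implicit Defensive.
Import Order.TTheory GRing.Theory Num.Theory.
Local Open Scope ring_scope.

Section Model.
Variable R : realFieldType.
(* per-user constants: D (data size), r (spectral efficiency),
   rho (computing intensity), zeta (output/input ratio) *)
Variables (D r rho zeta : R).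

Definition cap (B : R) : R := B * r.

Definition Tu (B RS F eta : R) : R :=
  let c := cap B in
  if F / rho <= eta * c then
    if RS <= zeta * (F / rho) + (1 - eta) * c then
      if eta * RS / (zeta * eta + 1 - eta) <= F / rho
      then D / RS * (zeta * eta + 1 - eta)
      else eta * D * rho / F
    else eta * D * rho / F
  else
    if RS <= (zeta * eta + 1 - eta) * c
    then D / RS * (zeta * eta + 1 - eta)
    else D / c.

Definition Vu (B RS F eta : R) : R :=
  let c := cap B in
  if F / rho <= eta * c then
    if RS <= zeta * (F / rho) + (1 - eta) * c then
      D / c * (c - RS - (1 - zeta) * (F / rho))
    else D / c * (eta * c - F / rho)
  else
    if RS <= (zeta * eta + 1 - eta) * c
    then D / c * ((zeta * eta + 1 - eta) * c - RS)
    else 0.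

Definition eta_opt (B RS F : R) : R :=
  let c := cap B in
  if c < RS then 0
  else if c < RS / zeta then
    if F / rho < (c - RS) / (1 - zeta)
    then F / (F * (1 - zeta) + rho * RS)
    else (c - RS) / ((1 - zeta) * c)
  else if F / rho < RS / zeta
    then F / (F * (1 - zeta) + rho * RS)
  else 1.

Definition T_opt (B RS F : R) : R :=
  let c := cap B in
  if c < RS then D / c
  else if c < RS / zeta then
    if F / rho < (c - RS) / (1 - zeta)
    then D * rho / (F * (1 - zeta) + rho * RS)
    else D / c
  else if F / rho < RS / zeta
    then D * rho / (F * (1 - zeta) + rho * RS)
  else zeta * D / RS.

Definition V_opt (B RS F : R) : R :=
  let c := cap B in
  if c < RS then 0
  else if c < RS / zeta then
    if F / rho < (c - RS) / (1 - zeta)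
    then D / c * (c - RS - (1 - zeta) * (F / rho))
    else 0
  else if F / rho < RS / zeta
    then D / c * (c - RS - (1 - zeta) * (F / rho))
  else if F / rho < c
    then D / c * (c - RS - (1 - zeta) * (F / rho))
  else D / c * (zeta * c - RS).
End Model.

(* Write c = B r and f = F / rho.  Factoring out D, the latency T is D times a
   piecewise quantity which, for every eta in [0, 1], is at least each of 1/c,
   zeta/R^S and 1/(f (1 - zeta) + R^S); likewise V is D/c times a quantity at
   least each of 0, c - R^S - (1 - zeta) f and zeta c - R^S.  In each of the six
   regimes, eta^opt selects a branch of T and of V where both quantities equal
   one of their lower bounds, so eta^opt minimizes T and V simultaneously. *)

From mathcomp Require Import all_boot all_order all_algebra.
From mathcomp Require Import ring lra.
Import Order.TTheory GRing.Theory Num.Theory.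
Set Implicit Arguments. Unset Strict Implicit.
Local Open Scope ring_scope.

Lemma ler_pdiv_cross (R : numFieldType) (a b x y : R) :
  0 < b -> 0 < y -> a * y <= x * b -> a / b <= x / y.
Proof. by move=> b0 y0 h; rewrite ler_pdivrMr // mulrAC ler_pdivlMr. Qed.

Section Offloading.
Variables (R : realFieldType) (z RS c f : R).

Definition output_ratio (eta : R) : R := z * eta + 1 - eta.

Definition unit_latency (eta : R) : R :=
  if f <= eta * c then
    if RS <= z * f + (1 - eta) * c then
      if eta * RS / output_ratio eta <= f then output_ratio eta / RS
      else eta / f
    else eta / f
  else if RS <= output_ratio eta * c then output_ratio eta / RS
  else 1 / c.

Definition backlog_rate (eta : R) : R :=
  if f <= eta * c then
    if RS <= z * f + (1 - eta) * c then c - RS - (1 - z) * f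
    else eta * c - f
  else if RS <= output_ratio eta * c then output_ratio eta * c - RS
  else 0.

Definition above_latency_bounds (x : R) : Prop :=
  [/\ 1 / c <= x, z / RS <= x & 1 / (f * (1 - z) + RS) <= x].

Definition above_backlog_bounds (x : R) : Prop :=
  [/\ 0 <= x, c - RS - (1 - z) * f <= x & z * c - RS <= x].

Lemma output_ratio_ge {eta : R} : z < 1 -> eta <= 1 -> z <= output_ratio eta.
Proof.
move=> z_lt1 eta_le1; have : 0 <= (1 - z) * (1 - eta) by apply: mulr_ge0; lra.
by rewrite /output_ratio; lra.
Qed.

Lemma above_latency_bounds_comm (eta : R) :
  z < 1 -> 0 < RS -> 0 < c -> 0 < f -> 0 <= eta <= 1 ->
  RS <= output_ratio eta * c -> eta * RS <= output_ratio eta * f ->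
  above_latency_bounds (output_ratio eta / RS).
Proof.
move=> z_lt1 RS_gt0 c_gt0 f_gt0 /andP[eta_ge0 eta_le1] RS_le_gc etaRS_le_gf.
have := output_ratio_ge z_lt1 eta_le1.
rewrite /above_latency_bounds /output_ratio in RS_le_gc etaRS_le_gf * => g_ge_z.
split; apply: ler_pdiv_cross => //; nra.
Qed.

Lemma above_latency_bounds_comp (eta : R) :
  z < 1 -> 0 < RS -> 0 < c -> 0 < f -> 0 <= eta <= 1 ->
  f <= eta * c -> output_ratio eta * f <= eta * RS ->
  above_latency_bounds (eta / f).
Proof.
move=> z_lt1 RS_gt0 c_gt0 f_gt0 /andP[eta_ge0 eta_le1] f_le_etac gf_le_etaRS.
have := output_ratio_ge z_lt1 eta_le1.
rewrite /above_latency_bounds /output_ratio in gf_le_etaRS * => g_ge_z.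
split; apply: ler_pdiv_cross => //; nra.
Qed.

Lemma above_latency_bounds_raw (eta : R) :
  z < 1 -> 0 < RS -> 0 < c -> 0 < f -> 0 <= eta <= 1 ->
  eta * c < f -> output_ratio eta * c < RS ->
  above_latency_bounds (1 / c).
Proof.
move=> z_lt1 RS_gt0 c_gt0 f_gt0 /andP[eta_ge0 eta_le1] etac_lt_f gc_lt_RS.
have := output_ratio_ge z_lt1 eta_le1.
rewrite /above_latency_bounds /output_ratio in gc_lt_RS * => g_ge_z.
split; apply: ler_pdiv_cross => //; nra.
Qed.

Lemma unit_latency_bounds (eta : R) :
  0 < z -> z < 1 -> 0 < RS -> 0 < c -> 0 < f -> 0 <= eta <= 1 ->
  above_latency_bounds (unit_latency eta).
Proof.
move=> z_gt0 z_lt1 RS_gt0 c_gt0 f_gt0 eta01; have /andP[eta_ge0 eta_le1] := eta01.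
have g_ge_z := output_ratio_ge z_lt1 eta_le1.
have g_gt0 := lt_le_trans z_gt0 g_ge_z.
rewrite /unit_latency; case: ifPn => [f_le_etac|]; last rewrite -ltNge => etac_lt_f.
- case: ifPn => [RS_le_fwd|]; last rewrite -ltNge => fwd_lt_RS.
  + case: ifPn => [thr_le_f|]; last rewrite -ltNge => f_lt_thr.
    * rewrite ler_pdivrMr // in thr_le_f.
      apply: above_latency_bounds_comm => //; rewrite /output_ratio in thr_le_f *; nra.
    * rewrite ltr_pdivlMr // in f_lt_thr.
      by apply: above_latency_bounds_comp => //; rewrite mulrC ltW.
  + apply: above_latency_bounds_comp => //; rewrite /output_ratio; nra.
- case: ifPn => [RS_le_gc|]; last rewrite -ltNge => gc_lt_RS.
  + apply: above_latency_bounds_comm => //.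
    rewrite /output_ratio in g_gt0 RS_le_gc *; nra.
  + exact: above_latency_bounds_raw gc_lt_RS.
Qed.

Lemma backlog_rate_bounds (eta : R) :
  z < 1 -> 0 < c -> 0 <= eta <= 1 -> above_backlog_bounds (backlog_rate eta).
Proof.
move=> z_lt1 c_gt0 /andP[eta_ge0 eta_le1].
have g_ge_z := output_ratio_ge z_lt1 eta_le1.
rewrite /backlog_rate /above_backlog_bounds /output_ratio in g_ge_z *.
case: ifPn => [f_le_etac|]; last rewrite -ltNge => etac_lt_f.
- by case: ifPn => [RS_le_fwd|]; last rewrite -ltNge => fwd_lt_RS; split; nra.
- by case: ifPn => [RS_le_gc|]; last rewrite -ltNge => gc_lt_RS; split; nra.
Qed.

Definition eta_star : R :=
  if c < RS then 0
  else if c < RS / z then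
    if f < (c - RS) / (1 - z) then f / (f * (1 - z) + RS)
    else (c - RS) / ((1 - z) * c)
  else if f < RS / z then f / (f * (1 - z) + RS)
  else 1.

Definition latency_star : R :=
  if c < RS then 1 / c
  else if c < RS / z then
    if f < (c - RS) / (1 - z) then 1 / (f * (1 - z) + RS) else 1 / c
  else if f < RS / z then 1 / (f * (1 - z) + RS)
  else z / RS.

Definition backlog_star : R :=
  if c < RS then 0
  else if c < RS / z then
    if f < (c - RS) / (1 - z) then c - RS - (1 - z) * f else 0
  else if f < RS / z then c - RS - (1 - z) * f
  else if f < c then c - RS - (1 - z) * f
  else z * c - RS.

Lemma latency_star_le x : above_latency_bounds x -> latency_star <= x.
Proof. by case=> *; rewrite /latency_star; repeat case: ifP. Qed.

Lemma backlog_star_le x : above_backlog_bounds x -> backlog_star <= x.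
Proof. by case=> *; rewrite /backlog_star; repeat case: ifP. Qed.

Lemma no_offload_values : 0 < f -> c < RS ->
  unit_latency 0 = 1 / c /\ backlog_rate 0 = 0.
Proof.
move=> f_gt0 c_lt_RS; rewrite /unit_latency /backlog_rate.
have -> : (f <= 0 * c) = false by rewrite mul0r lt_geF.
have -> : (RS <= output_ratio 0 * c) = false.
  by rewrite /output_ratio mulr0 add0r subr0 mul1r lt_geF.
by [].
Qed.

Lemma balanced_offload_values :
  0 < z -> z < 1 -> 0 < RS -> 0 < f ->
  f * (1 - z) + RS < c -> z * f < RS ->
  let eta := f / (f * (1 - z) + RS) in
  [/\ 0 <= eta <= 1, unit_latency eta = 1 / (f * (1 - z) + RS)
    & backlog_rate eta = c - RS - (1 - z) * f].
Proof.
move=> z_gt0 z_lt1 RS_gt0 f_gt0 S_lt_c zf_lt_RS eta.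
have S_gt0 : 0 < f * (1 - z) + RS by nra.
have eta_S : eta * (f * (1 - z) + RS) = f by rewrite /eta divfK ?gt_eqF.
have eta_ge0 : 0 <= eta by rewrite divr_ge0 ?ltW.
have eta_le1 : eta <= 1 by rewrite ler_pdivrMr // mul1r; nra.
have g_eq : output_ratio eta = RS / (f * (1 - z) + RS).
  by rewrite /output_ratio /eta; field; rewrite gt_eqF.
have f_le_etac : f <= eta * c by nra.
have RS_le_fwd : RS <= z * f + (1 - eta) * c by nra.
have thr : eta * RS / output_ratio eta = f.
  by rewrite g_eq /eta; field; rewrite !gt_eqF.
split; first by rewrite eta_ge0.
- by rewrite /unit_latency f_le_etac RS_le_fwd thr lexx g_eq; field; rewrite !gt_eqF.
- by rewrite /backlog_rate f_le_etac RS_le_fwd.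
Qed.

Lemma capacity_offload_values :
  z < 1 -> 0 < RS -> 0 < c -> RS <= c -> z * c < RS -> c - RS <= f * (1 - z) ->
  let eta := (c - RS) / ((1 - z) * c) in
  [/\ 0 <= eta <= 1, unit_latency eta = 1 / c & backlog_rate eta = 0].
Proof.
move=> z_lt1 RS_gt0 c_gt0 RS_le_c zc_lt_RS saturated eta.
have zc_gt0 : 0 < (1 - z) * c by nra.
have eta_c : eta * c * (1 - z) = c - RS.
  by rewrite /eta; field; rewrite !gt_eqF //; lra.
have eta_ge0 : 0 <= eta by apply: divr_ge0; [rewrite subr_ge0 | exact: ltW].
have eta_le1 : eta <= 1 by rewrite ler_pdivrMr // mul1r; nra.
have g_c : output_ratio eta * c = RS by rewrite /output_ratio; lra.
have g_eq : output_ratio eta = RS / c by rewrite -g_c mulfK ?gt_eqF.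
have etac_le_f : eta * c <= f by nra.
rewrite eta_ge0 eta_le1 /unit_latency /backlog_rate g_c lexx.
case: ifPn => [f_le | _]; last by split=> //; [rewrite g_eq; field; rewrite !gt_eqF | rewrite subrr].
have f_eq : f = eta * c by apply/eqP; rewrite eq_le f_le.
have fwd_eq : z * f + (1 - eta) * c = RS by rewrite -g_c f_eq /output_ratio; ring.
have thr : eta * RS / output_ratio eta = f by rewrite g_eq f_eq; field; rewrite !gt_eqF.
rewrite fwd_eq thr !lexx g_eq; split=> //; first by field; rewrite !gt_eqF.
by rewrite f_eq; lra.
Qed.

Lemma full_offload_values : 0 < z -> RS <= z * c -> RS <= z * f ->
  unit_latency 1 = z / RS /\
  backlog_rate 1 = if f < c then c - RS - (1 - z) * f else z * c - RS.
Proof.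
move=> z_gt0 RS_le_zc RS_le_zf.
have g1 : output_ratio 1 = z by rewrite /output_ratio mulr1 addrK.
have thr : RS / z <= f by rewrite ler_pdivrMr // mulrC.
rewrite /unit_latency /backlog_rate g1 subrr mul0r addr0 !mul1r.
case: ifPn => [f_le_c|]; last rewrite -ltNge => c_lt_f.
  rewrite RS_le_zf thr; split=> //; case: ifPn => //; rewrite -leNgt => c_le_f.
  have -> : f = c by apply/eqP; rewrite eq_le f_le_c.
  ring.
by rewrite RS_le_zc ltNge (ltW c_lt_f).
Qed.

Lemma eta_star_values : 0 < z -> z < 1 -> 0 < RS -> 0 < c -> 0 < f ->
  [/\ 0 <= eta_star <= 1, unit_latency eta_star = latency_star
    & backlog_rate eta_star = backlog_star].
Proof.
move=> z_gt0 z_lt1 RS_gt0 c_gt0 f_gt0; have subz_gt0 : 0 < 1 - z by lra.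
rewrite /eta_star /latency_star /backlog_star.
case: ifPn => [c_lt_RS|]; last rewrite -leNgt => RS_le_c.
  by have [-> ->] := no_offload_values f_gt0 c_lt_RS; rewrite lexx ler01.
case: ifPn; rewrite ltr_pdivlMr // mulrC; last rewrite -leNgt.
- move=> zc_lt_RS; case: ifPn; rewrite ltr_pdivlMr //; last rewrite -leNgt.
  + move=> unsaturated; apply: balanced_offload_values => //; first lra.
    have : 0 < (1 - z) * (RS - z * f) by nra.
    nra.
  + exact: capacity_offload_values.
- move=> RS_le_zc; case: ifPn; rewrite ltr_pdivlMr // mulrC; last rewrite -leNgt.
  + move=> zf_lt_RS; apply: balanced_offload_values => //; nra.
  + move=> RS_le_zf; have [-> ->] := full_offload_values z_gt0 RS_le_zc RS_le_zf.
    by rewrite ler01 lexx.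
Qed.

End Offloading.

Section Normalization.
Variables (R : realFieldType) (D r rho zeta B RS F : R).
Hypotheses (rho_gt0 : 0 < rho) (RS_gt0 : 0 < RS) (F_gt0 : 0 < F) (c_gt0 : 0 < cap r B).
Hypothesis zeta_lt1 : zeta < 1.

Lemma offload_denominator_gt0 : 0 < F * (1 - zeta) + rho * RS.
Proof. by apply: addr_gt0; apply: mulr_gt0; rewrite ?subr_gt0. Qed.

Lemma Tu_unit_latency eta :
  Tu D r rho zeta B RS F eta = D * unit_latency zeta RS (cap r B) (F / rho) eta.
Proof.
rewrite /Tu /unit_latency /output_ratio /=.
by repeat case: ifP => _; field; rewrite ?gt_eqF.
Qed.

Lemma Vu_backlog_rate eta :
  Vu D r rho zeta B RS F eta = D / cap r B * backlog_rate zeta RS (cap r B) (F / rho) eta.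
Proof. by rewrite /Vu /backlog_rate /=; repeat case: ifP => _; rewrite ?mulr0. Qed.

Lemma T_opt_latency_star :
  T_opt D r rho zeta B RS F = D * latency_star zeta RS (cap r B) (F / rho).
Proof.
have S_gt0 := offload_denominator_gt0.
rewrite /T_opt /latency_star /=.
by repeat case: ifP => _; field; rewrite ?(mulrC RS) ?gt_eqF.
Qed.

Lemma V_opt_backlog_star :
  V_opt D r rho zeta B RS F = D / cap r B * backlog_star zeta RS (cap r B) (F / rho).
Proof. by rewrite /V_opt /backlog_star /=; repeat case: ifP => _; rewrite ?mulr0. Qed.

Lemma eta_opt_eta_star :
  eta_opt r rho zeta B RS F = eta_star zeta RS (cap r B) (F / rho).
Proof.
have S_gt0 := offload_denominator_gt0.
rewrite /eta_opt /eta_star /=.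
have -> : F / (F * (1 - zeta) + rho * RS) = F / rho / (F / rho * (1 - zeta) + RS).
  by field; rewrite ?(mulrC RS) ?gt_eqF.
by [].
Qed.

End Normalization.

Theorem theorem1 (R : realFieldType) (D r rho zeta B RS F : R)
  (hD : 0 < D) (hr : 0 < r) (hrho : 0 < rho) (hz0 : 0 < zeta) (hz1 : zeta < 1)
  (hB : 0 < B) (hRS : 0 < RS) (hF : 0 < F) :
  let e := eta_opt r rho zeta B RS F in
  [/\ 0 <= e <= 1,
      Tu D r rho zeta B RS F e = T_opt D r rho zeta B RS F,
      Vu D r rho zeta B RS F e = V_opt D r rho zeta B RS F &
      forall eta : R, 0 <= eta <= 1 ->
        Tu D r rho zeta B RS F e <= Tu D r rho zeta B RS F eta /\
        Vu D r rho zeta B RS F e <= Vu D r rho zeta B RS F eta].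
Proof.
have c_gt0 : 0 < cap r B by apply: mulr_gt0.
have f_gt0 : 0 < F / rho by apply: divr_gt0.
have [star01 latency_eq backlog_eq] := eta_star_values hz0 hz1 hRS c_gt0 f_gt0.
rewrite /= eta_opt_eta_star // !Tu_unit_latency // !Vu_backlog_rate //.
rewrite T_opt_latency_star // V_opt_backlog_star // latency_eq backlog_eq.
split=> // eta eta01; rewrite Tu_unit_latency // Vu_backlog_rate //; split.
- apply: ler_wpM2l; first exact: ltW.
  exact/latency_star_le/unit_latency_bounds.
- apply: ler_wpM2l; first by apply: divr_ge0; apply: ltW.
  exact/backlog_star_le/backlog_rate_bounds.
Qed.
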